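(* Let $n\geq1$ and let $X$ be an indecomposable object of $\overline{\mathcal{C}}_n$. Then $X$ is homologically connected.
   Context: Let $k$ be a field, $S$ the unit circle with anticlockwise orientation. Fix a discrete infinite subset $\mathscr{M}\subset S$ such that every limit point of $\mathscr{M}$ is a limit of both an increasing and a decreasing sequence of $\mathscr{M}$ in the cyclic order, with exactly $n$ such limit points (accumulation points); put $\overline{\mathscr{M}}=\mathscr{M}\cup L(\mathscr{M})$. Each $x\in\mathscr{M}$ has a cyclic predecessor $x^-$ and successor $x^+$ in $\mathscr{M}$; for accumulation points $a^\pm=a$. An arc of $\overline{\mathscr{M}}$ is an unordered pair $\{x_1,x_2\}\subset\overline{\mathscr{M}}$ with $x_2\ne x_1,x_1^-,x_1^+$; arcs cross if their endpoints strictly alternate cyclically; $\{x_1,x_2\}[1]=\{x_1^-,x_2^-\}$. The Paquette–Yıldırım category $\overline{\mathcal{C}}_n$ is a Hom-finite, $k$-linear, Krull–Schmidt triangulated category with suspension $[1]$ whose indecomposables $X$ correspond bijectively to arcs $\ell_X$ of $\overline{\mathscr{M}}$, with $\ell_{X[1]}=\ell_X[1]$, and $\mathrm{Hom}(X,Y)\cong k$ if $\ell_X$ and $\ell_Y[-1]$ cross, or both have an endpoint at a common accumulation point with $\ell_Y[-1]$ an anticlockwise rotation of $\ell_X$ about it; $0$ otherwise. For an object $G$, $\langle G\rangle_1$ is the full subcategory of direct summands of finite direct sums of suspensions $G[i]$. $G$ is homologically connected if for any two indecomposables $F,F'\in\langle G\rangle_1$ there is a finite sequence $F=F_1,\dots,F_{l+1}=F'$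 of indecomposables in $\langle G\rangle_1$ such that for each $i$ there is a nonzero element of $\mathrm{Ext}^1(F_i,F_{i+1})$ or of $\mathrm{Ext}^1(F_{i+1},F_i)$. *)

(* the circle S is parametrised by t in [0,1) via
   t |-> (cos 2 pi t, sin 2 pi t); anticlockwise = increasing t (mod 1). *)
From Stdlib Require Import Reals Lra ZArith List Relations ClassicalEpsilon.
Import ListNotations.
Open Scope R_scope.

Definition inS (t : R) : Prop := 0 <= t < 1.

Definition cyc (a b c : R) : Prop :=
  (a < b < c) \/ (b < c < a) \/ (c < a < b).

Definition ccw (m a : R) : R := if Rle_dec m a then a - m else a - m + 1.

Definition cdist (x y : R) : R := Rmin (ccw x y) (ccw y x).

Section Marked.
Variable M : R -> Prop.

Definition is_lim (a : R) : Prop :=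
  inS a /\ forall eps, 0 < eps -> exists m, M m /\ m <> a /\ cdist m a < eps.

(* a is the limit of an increasing (resp. decreasing) sequence of M in the
   cyclic order, i.e. points of M accumulate at a from the clockwise
   (resp. anticlockwise) side *)
Definition lim_from_below (a : R) : Prop :=
  forall eps, 0 < eps -> exists m, M m /\ 0 < ccw m a < eps.
Definition lim_from_above (a : R) : Prop :=
  forall eps, 0 < eps -> exists m, M m /\ 0 < ccw a m < eps.

Definition admissible (n : nat) : Prop :=
  (forall x, M x -> inS x) /\
  (forall x, M x -> exists eps, 0 < eps /\
        forall y, M y -> y <> x -> eps <= cdist x y) /\
  (forall l : list R, exists x, M x /\ ~ In x l) /\
  (forall a, is_lim a -> lim_from_below a /\ lim_from_above a) /\
  (exists L : list R, NoDup L /\ length L = n /\ forall a, In a L <-> is_lim a).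

Definition Mbar (x : R) : Prop := M x \/ is_lim x.

(* cyclic successor x^+ and predecessor x^- (identity off M) *)
Definition succ (x : R) : R :=
  match excluded_middle_informative (M x) with
  | left _ => epsilon (inhabits 0)
      (fun y => M y /\ y <> x /\ forall z, M z -> ~ cyc x z y)
  | right _ => x
  end.
Definition pred (x : R) : R :=
  match excluded_middle_informative (M x) with
  | left _ => epsilon (inhabits 0)
      (fun y => M y /\ y <> x /\ forall z, M z -> ~ cyc y z x)
  | right _ => x
  end.

(* arcs: unordered pairs, represented canonically as (x1, x2) with x1 < x2 *)
Definition arc := (R * R)%type.
Definition mk_arc (a b : R) : arc := if Rlt_dec a b then (a, b) else (b, a).

Definition is_arc (l : arc) : Prop :=
  let (x1, x2) := l in
  x1 < x2 /\ Mbar x1 /\ Mbar x2 /\ x2 <> x1 /\ x2 <> pred x1 /\ x2 <> succ x1.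

(* suspension {x1,x2}[1] = {x1^-, x2^-} and its inverse *)
Definition shift (l : arc) : arc := mk_arc (pred (fst l)) (pred (snd l)).
Definition unshift (l : arc) : arc := mk_arc (succ (fst l)) (succ (snd l)).

Definition shiftZ (i : Z) (l : arc) : arc :=
  match i with
  | Z0 => l
  | Zpos p => Nat.iter (Pos.to_nat p) shift l
  | Zneg p => Nat.iter (Pos.to_nat p) unshift l
  end.

Definition crosses (l l' : arc) : Prop :=
  let (x1, x2) := l in let (y1, y2) := l' in
  (cyc x1 y1 x2 /\ cyc x2 y2 x1) \/ (cyc x1 y2 x2 /\ cyc x2 y1 x1).

(* l and l' share an endpoint a which is an accumulation point, and l' is an
   anticlockwise rotation of l about a (the trivial rotation included) *)
Definition rotates (l l' : arc) : Prop :=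
  exists a x y, is_lim a /\ l = mk_arc a x /\ l' = mk_arc a y /\
    (y = x \/ cyc x y a).

(* Hom(X,Y) <> 0, in terms of the arcs l = l_X, m = l_Y *)
Definition hom_nz (l m : arc) : Prop :=
  crosses l (unshift m) \/ rotates l (unshift m).

(* Ext^1(X,Y) = Hom(X, Y[1]) <> 0 *)
Definition ext1_nz (l m : arc) : Prop := hom_nz l (shift m).

(* Objects of the Krull-Schmidt category: finite direct sums of
   indecomposables, i.e. finite lists of arcs. *)
Definition obj := list arc.
Definition obj_shift (i : Z) (G : obj) : obj := map (shiftZ i) G.

(* F is an indecomposable object of <G>_1: a direct summand of a finite direct
   sum of suspensions G[i] *)
Definition indec_in (G : obj) (F : arc) : Prop :=
  is_arc F /\ exists is : list Z, In F (concat (map (fun i => obj_shift i G) is)).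

Definition ext_step (G : obj) (F F' : arc) : Prop :=
  indec_in G F /\ indec_in G F' /\ (ext1_nz F F' \/ ext1_nz F' F).

Definition hom_connected (G : obj) : Prop :=
  forall F F', indec_in G F -> indec_in G F' ->
    clos_refl_trans_1n arc (ext_step G) F F'.

End Marked.

(* The indecomposables of <X>_1 are the suspensions X[i], so it suffices to
   link X[i+1] to X[i]. Since Ext^1(F[1], F) = Hom(F[1], F[1]), this amounts
   to comparing the arc l of F with l[1]: if both endpoints of l lie in M,
   each endpoint x lies strictly between x^- and the other endpoint's
   predecessor, so l[1] crosses l; if exactly one endpoint is an accumulation
   point a, then l[1] is l rotated clockwise about a, because M accumulates
   at a from both sides and so a cannot lie strictly between x^- and x; if
   both are accumulation points, X[i+1] = X[i].
   The only analytic input is that x^- and x^+ exist: the infimum of the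
   distances from x to the other points of M is positive by discreteness and
   attained, since otherwise its witness point would be an accumulation point
   approached from one side only. *)

From Stdlib Require Import Reals Lra List Relations Classical ClassicalEpsilon.
Open Scope R_scope.

Lemma ccw_range u v : inS u -> inS v -> 0 <= ccw u v < 1.
Proof. unfold ccw, inS; destruct Rle_dec; lra. Qed.

Lemma ccw_pos u v : inS u -> inS v -> u <> v -> 0 < ccw u v.
Proof.
  intros Hu Hv Huv; unfold ccw, inS in *; destruct Rle_dec; [|lra].
  destruct (Req_dec u v); [contradiction|lra].
Qed.

Lemma ccw_cyc a b c : inS a -> inS b -> inS c -> 0 < ccw a b < ccw a c -> cyc a b c.
Proof. unfold cyc, ccw, inS; intros; repeat destruct Rle_dec; lra. Qed.

Lemma cyc_total a b c : a <> b -> b <> c -> a <> c -> cyc a b c \/ cyc a c b.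
Proof.
  unfold cyc; intros.
  destruct (Rtotal_order a b) as [?|[?|?]]; [|contradiction|];
  destruct (Rtotal_order b c) as [?|[?|?]]; try contradiction;
  destruct (Rtotal_order a c) as [?|[?|?]]; try contradiction; lra.
Qed.

Lemma cyc_trans p a x m : cyc p a x -> cyc a m x -> cyc p m x.
Proof. unfold cyc; lra. Qed.

Lemma cyc_rot a b c : cyc a b c -> cyc b c a.
Proof. unfold cyc; lra. Qed.

Lemma cdist_comm u v : cdist u v = cdist v u.
Proof. apply Rmin_comm. Qed.

(* The side [b] lets one argument produce both neighbours: [true] (measuring
   anticlockwise towards [x]) yields [x^-], [false] yields [x^+]. *)
Definition gap (b : bool) (u v : R) : R := if b then ccw u v else ccw v u.

Definition between (b : bool) (y z x : R) : Prop := if b then cyc y z x else cyc x z y.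

Lemma gap_range b u v : inS u -> inS v -> 0 <= gap b u v < 1.
Proof. destruct b; intros; apply ccw_range; assumption. Qed.

Lemma gap_diag b u : gap b u u = 0.
Proof. destruct b; unfold gap, ccw; destruct Rle_dec; lra. Qed.

Lemma gap_tri b u v w : inS u -> inS v -> inS w ->
  gap b u v + gap b v w = gap b u w \/ gap b u v + gap b v w = gap b u w + 1.
Proof. destruct b; unfold gap, ccw, inS; intros; repeat destruct Rle_dec; lra. Qed.

Lemma cdist_le_gap b u v : cdist u v <= gap b u v.
Proof. destruct b; unfold cdist, gap; [apply Rmin_l | apply Rmin_r]. Qed.

Lemma ex_gap_point b x d : inS x -> 0 <= d < 1 -> exists a, inS a /\ gap b a x = d.
Proof.
  unfold inS, gap, ccw; intros Hx Hd; destruct b.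
  - destruct (Rle_dec d x).
    + exists (x - d); split; [lra|]; destruct Rle_dec; lra.
    + exists (x - d + 1); split; [lra|]; destruct Rle_dec; lra.
  - destruct (Rlt_dec (x + d) 1).
    + exists (x + d); split; [lra|]; destruct Rle_dec; lra.
    + exists (x + d - 1); split; [lra|]; destruct Rle_dec; lra.
Qed.

Lemma between_gap b y z x : inS y -> inS z -> inS x ->
  between b y z x -> 0 < gap b z x < gap b y x.
Proof. destruct b; unfold between, gap, cyc, ccw, inS; intros; repeat destruct Rle_dec; lra. Qed.

Lemma ex_inf {A} (P : A -> Prop) (f : A -> R) (lb : R) (a0 : A) :
  P a0 -> (forall a, P a -> lb <= f a) ->
  exists d, (forall a, P a -> d <= f a) /\
    (forall e, 0 < e -> exists a, P a /\ f a < d + e).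
Proof.
  intros Ha0 Hlb.
  set (E := fun t => exists a, P a /\ t = - f a).
  assert (HE : bound E) by (exists (- lb); intros t [a [Ha ->]]; specialize (Hlb a Ha); lra).
  destruct (completeness E HE) as [s [Hub Hleast]]; [exists (- f a0); exists a0; auto|].
  exists (- s); split.
  - intros a Ha; assert (E (- f a)) by (exists a; auto); specialize (Hub _ H); lra.
  - intros e He; apply NNPP; intro Hno.
    assert (is_upper_bound E (s - e)).
    { intros t [a [Ha ->]]; destruct (Rlt_le_dec (f a) (- s + e)); [|lra].
      exfalso; apply Hno; exists a; auto. }
    specialize (Hleast _ H); lra.
Qed.

Section MarkedCircle.

Variable M : R -> Prop.
Hypothesis M_inS : forall x, M x -> inS x.
Hypothesis M_discrete : forall x, M x -> exists eps, 0 < eps /\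
  forall y, M y -> y <> x -> eps <= cdist x y.
Hypothesis M_infinite : forall l : list R, exists x, M x /\ ~ In x l.
Hypothesis M_two_sided : forall a, is_lim M a -> lim_from_below M a /\ lim_from_above M a.

Lemma lim_notM a : is_lim M a -> ~ M a.
Proof.
  intros [_ Hlim] Ha; destruct (M_discrete a Ha) as [e [He Hsep]].
  destruct (Hlim e He) as [m [Hm [Hma Hd]]].
  specialize (Hsep m Hm Hma); rewrite cdist_comm in Hsep; lra.
Qed.

Lemma lim_gap b a : is_lim M a -> forall e, 0 < e -> exists m, M m /\ 0 < gap b a m < e.
Proof. intros Ha; destruct (M_two_sided a Ha); destruct b; assumption. Qed.

Definition is_inf_gap (b : bool) (x d : R) : Prop :=
  (forall m, M m -> m <> x -> d <= gap b m x) /\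
  (forall e, 0 < e -> exists m, M m /\ m <> x /\ gap b m x < d + e).

Lemma ex_inf_gap b x : M x -> exists d, 0 < d < 1 /\ is_inf_gap b x d.
Proof.
  intros Hx; destruct (M_discrete x Hx) as [eps [Heps Hsep]].
  destruct (M_infinite (x :: nil)) as [m0 [Hm0 Hm0x]].
  assert (Hm0x' : m0 <> x) by (intros ->; apply Hm0x; left; reflexivity).
  destruct (ex_inf (fun m => M m /\ m <> x) (fun m => gap b m x) 0 m0)
    as [d [Hlb Hinf]]; [tauto| intros m [Hm _]; apply gap_range; auto|].
  exists d; split; [split|split; [intros m Hm Hmx; exact (Hlb m (conj Hm Hmx))|]].
  - destruct (Rlt_le_dec d eps) as [Hlt|]; [|lra].
    destruct (Hinf (eps - d)) as [m [[Hm Hmx] Hgap]]; [lra|].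
    specialize (Hsep m Hm Hmx); rewrite cdist_comm in Hsep.
    pose proof (cdist_le_gap b m x); lra.
  - pose proof (Hlb m0 (conj Hm0 Hm0x')).
    pose proof (gap_range b m0 x (M_inS _ Hm0) (M_inS _ Hx)); lra.
  - intros e He; destruct (Hinf e He) as [m [[Hm Hmx] Hgap]]; eauto.
Qed.

(* The points of [M] realising the infimum approach [a] only from the side
   away from [x]. *)
Lemma lim_of_unattained_inf_gap b x d a : M x -> d < 1 -> is_inf_gap b x d ->
  (forall m, M m -> m <> x -> gap b m x <> d) -> inS a -> gap b a x = d -> is_lim M a.
Proof.
  intros Hx Hd1 [Hlb Hinf] Hne Ha Hax; split; [exact Ha|]; intros e He.
  destruct (Hinf (Rmin e (1 - d))) as [m [Hm [Hmx Hgap]]]; [apply Rmin_pos; lra|].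
  pose proof (Rmin_l e (1 - d)); pose proof (Rmin_r e (1 - d)).
  pose proof (Hlb m Hm Hmx); pose proof (Hne m Hm Hmx).
  pose proof (gap_range b m a (M_inS _ Hm) Ha).
  exists m; split; [exact Hm|split].
  - intros ->; contradiction.
  - pose proof (cdist_le_gap b m a).
    destruct (gap_tri b m a x (M_inS _ Hm) Ha (M_inS _ Hx)); lra.
Qed.

Lemma inf_gap_attained b x d : M x -> 0 < d < 1 -> is_inf_gap b x d ->
  exists y, M y /\ y <> x /\ gap b y x = d.
Proof.
  intros Hx Hd Hinf; apply NNPP; intro Hno.
  assert (Hne : forall m, M m -> m <> x -> gap b m x <> d)
    by (intros m Hm Hmx Heq; apply Hno; eauto).
  destruct (ex_gap_point b x d (M_inS _ Hx)) as [a [Ha Hax]]; [lra|].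
  pose proof (lim_of_unattained_inf_gap b x d a Hx (proj2 Hd) Hinf Hne Ha Hax) as Hlim.
  destruct (lim_gap b a Hlim d (proj1 Hd)) as [m [Hm Hgap]].
  assert (Hmx : m <> x) by (intros ->; lra).
  pose proof (proj1 Hinf m Hm Hmx).
  pose proof (gap_range b m x (M_inS _ Hm) (M_inS _ Hx)).
  destruct (gap_tri b a m x Ha (M_inS _ Hm) (M_inS _ Hx)); lra.
Qed.

Lemma ex_nearest b x : M x ->
  exists y, M y /\ y <> x /\ forall z, M z -> ~ between b y z x.
Proof.
  intros Hx; destruct (ex_inf_gap b x Hx) as [d [Hd Hinf]].
  destruct (inf_gap_attained b x d Hx Hd Hinf) as [y [Hy [Hyx Hgap]]].
  exists y; split; [exact Hy|split; [exact Hyx|]]; intros z Hz Hbet.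
  pose proof (between_gap b y z x (M_inS _ Hy) (M_inS _ Hz) (M_inS _ Hx) Hbet).
  assert (Hzx : z <> x) by (intros ->; rewrite gap_diag in *; lra).
  pose proof (proj1 Hinf z Hz Hzx); lra.
Qed.

Lemma pred_spec x : M x ->
  M (pred M x) /\ pred M x <> x /\ forall z, M z -> ~ cyc (pred M x) z x.
Proof.
  intros Hx; unfold pred; destruct excluded_middle_informative; [|contradiction].
  apply epsilon_spec; exact (ex_nearest true x Hx).
Qed.

Lemma succ_spec x : M x ->
  M (succ M x) /\ succ M x <> x /\ forall z, M z -> ~ cyc x z (succ M x).
Proof.
  intros Hx; unfold succ; destruct excluded_middle_informative; [|contradiction].
  apply epsilon_spec; exact (ex_nearest false x Hx).
Qed.

Lemma pred_notM x : ~ M x -> pred M x = x.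
Proof. intros Hx; unfold pred; destruct excluded_middle_informative; tauto. Qed.

Lemma succ_notM x : ~ M x -> succ M x = x.
Proof. intros Hx; unfold succ; destruct excluded_middle_informative; tauto. Qed.

Lemma succ_pred x : succ M (pred M x) = x.
Proof.
  destruct (classic (M x)) as [Hx|Hx]; [|rewrite !pred_notM, succ_notM; auto].
  destruct (pred_spec x Hx) as [Hp [Hpx Hpnear]].
  destruct (succ_spec _ Hp) as [Hs [Hsp Hsnear]].
  apply NNPP; intro Hne.
  destruct (cyc_total (pred M x) (succ M (pred M x)) x) as [Hc|Hc]; auto.
  - exact (Hpnear _ Hs Hc).
  - exact (Hsnear _ Hx Hc).
Qed.

Lemma pred_succ x : pred M (succ M x) = x.
Proof.
  destruct (classic (M x)) as [Hx|Hx]; [|rewrite !succ_notM, pred_notM; auto].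
  destruct (succ_spec x Hx) as [Hs [Hsx Hsnear]].
  destruct (pred_spec _ Hs) as [Hp [Hps Hpnear]].
  apply NNPP; intro Hne.
  destruct (cyc_total x (pred M (succ M x)) (succ M x)) as [Hc|Hc]; auto.
  - exact (Hsnear _ Hp Hc).
  - exact (Hpnear _ Hx (cyc_rot _ _ _ (cyc_rot _ _ _ Hc))).
Qed.

Lemma Mbar_pred x : Mbar M x -> Mbar M (pred M x).
Proof.
  intros [Hx|Hx]; [left; apply (pred_spec x Hx)|].
  rewrite pred_notM; [right; exact Hx|apply lim_notM; exact Hx].
Qed.

Lemma Mbar_succ x : Mbar M x -> Mbar M (succ M x).
Proof.
  intros [Hx|Hx]; [left; apply (succ_spec x Hx)|].
  rewrite succ_notM; [right; exact Hx|apply lim_notM; exact Hx].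
Qed.

(* For a limit point [y] this uses the accumulation of [M] at [y] from the
   anticlockwise side. *)
Lemma cyc_pred_Mbar x y : M x -> Mbar M y -> y <> x -> y <> pred M x ->
  cyc (pred M x) x y.
Proof.
  intros Hx Hy Hyx Hyp; destruct (pred_spec x Hx) as [Hp [Hpx Hpnear]].
  destruct (cyc_total (pred M x) x y) as [Hc|Hc]; auto.
  exfalso; destruct Hy as [Hy|Hy]; [exact (Hpnear y Hy Hc)|].
  pose proof (proj1 Hy) as Sy; pose proof (M_inS x Hx) as Sx.
  destruct (proj2 (M_two_sided y Hy) (ccw y x)) as [m [Hm Hym]]; [apply ccw_pos; auto|].
  apply (Hpnear m Hm), (cyc_trans _ y); [exact Hc|apply ccw_cyc; auto; lra].
Qed.

Lemma mk_arc_comm a b : a <> b -> mk_arc a b = mk_arc b a.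
Proof. intros; unfold mk_arc; repeat destruct Rlt_dec; f_equal; lra. Qed.

Lemma mk_arc_lt a b : a < b -> mk_arc a b = (a, b).
Proof. intros; unfold mk_arc; destruct Rlt_dec; [reflexivity|lra]. Qed.

Lemma is_arc_mk a b : Mbar M a -> Mbar M b -> a <> b ->
  b <> pred M a -> b <> succ M a -> is_arc M (mk_arc a b).
Proof.
  intros Ha Hb Hab Hp Hs; unfold mk_arc; destruct Rlt_dec; simpl.
  - repeat split; auto.
  - repeat split; auto; [lra| |].
    + intros ->; apply Hs; rewrite succ_pred; reflexivity.
    + intros ->; apply Hp; rewrite pred_succ; reflexivity.
Qed.

Lemma shift_arc F : is_arc M F -> is_arc M (shift M F).
Proof.
  destruct F as [x1 x2]; intros (_ & H1 & H2 & Hne & Hp & Hs); unfold shift; simpl.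
  apply is_arc_mk; try apply Mbar_pred; auto.
  - intros Heq; apply Hne; rewrite <- (succ_pred x1), <- (succ_pred x2), Heq; reflexivity.
  - intros Heq; apply Hp; rewrite <- (succ_pred x2), Heq, succ_pred; reflexivity.
  - intros Heq; apply Hs; rewrite <- (succ_pred x2), Heq, succ_pred; reflexivity.
Qed.

Lemma unshift_arc F : is_arc M F -> is_arc M (unshift M F).
Proof.
  destruct F as [x1 x2]; intros (_ & H1 & H2 & Hne & Hp & Hs); unfold unshift; simpl.
  apply is_arc_mk; try apply Mbar_succ; auto.
  - intros Heq; apply Hne; rewrite <- (pred_succ x1), <- (pred_succ x2), Heq; reflexivity.
  - intros Heq; apply Hp; rewrite <- (pred_succ x2), Heq, pred_succ; reflexivity.
  - intros Heq; apply Hs; rewrite <- (pred_succ x2), Heq, pred_succ; reflexivity.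
Qed.

Lemma unshift_shift F : is_arc M F -> unshift M (shift M F) = F.
Proof.
  destruct F as [x1 x2]; intros [Hlt _]; unfold shift, unshift, mk_arc; simpl.
  destruct (Rlt_dec (pred M x1) (pred M x2)); simpl; rewrite !succ_pred;
    destruct Rlt_dec; solve [reflexivity | lra].
Qed.

Lemma shift_unshift F : is_arc M F -> shift M (unshift M F) = F.
Proof.
  destruct F as [x1 x2]; intros [Hlt _]; unfold shift, unshift, mk_arc; simpl.
  destruct (Rlt_dec (succ M x1) (succ M x2)); simpl; rewrite !pred_succ;
    destruct Rlt_dec; solve [reflexivity | lra].
Qed.

Lemma shift_fixed_or_ext1 F : is_arc M F -> shift M F = F \/ ext1_nz M (shift M F) F.
Proof.
  intros HF; unfold ext1_nz, hom_nz; rewrite unshift_shift by exact HF.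
  destruct F as [x1 x2]; destruct HF as (Hlt & H1 & H2 & Hne & Hp & Hs); unfold shift; simpl.
  assert (Hpx2 : x1 <> pred M x2) by (intros ->; apply Hs; rewrite succ_pred; reflexivity).
  destruct H1 as [m1|l1], H2 as [m2|l2].
  - assert (Hpp : pred M x1 <> pred M x2).
    { intros Heq; apply Hne; rewrite <- (succ_pred x1), <- (succ_pred x2), Heq; reflexivity. }
    pose proof (cyc_pred_Mbar x1 (pred M x2) m1 (Mbar_pred x2 (or_introl m2))
                  (not_eq_sym Hpx2) (not_eq_sym Hpp)) as Hc1.
    pose proof (cyc_pred_Mbar x2 (pred M x1) m2 (Mbar_pred x1 (or_introl m1))
                  (not_eq_sym Hp) Hpp) as Hc2.
    right; left; unfold mk_arc; destruct Rlt_dec; simpl; [left|right]; split; assumption.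
  - right; right; exists x2, (pred M x1), x1.
    rewrite (pred_notM x2) by (apply lim_notM; exact l2).
    split; [exact l2|split; [apply mk_arc_comm; exact (not_eq_sym Hp)|split]].
    + rewrite mk_arc_comm, mk_arc_lt; [reflexivity|lra|lra].
    + right; apply cyc_pred_Mbar; [exact m1|right; exact l2|lra|exact Hp].
  - right; right; exists x1, (pred M x2), x2.
    rewrite (pred_notM x1) by (apply lim_notM; exact l1).
    split; [exact l1|split; [reflexivity|split; [symmetry; apply mk_arc_lt; lra|]]].
    right; apply cyc_pred_Mbar; [exact m2|right; exact l1|lra|exact Hpx2].
  - left; rewrite !pred_notM by (apply lim_notM; assumption); apply mk_arc_lt; exact Hlt.
Qed.

Lemma shiftZ_arc i F : is_arc M F -> is_arc M (shiftZ M i F).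
Proof.
  intros HF; destruct i as [|p|p]; simpl; [exact HF| |];
    induction (Pos.to_nat p); simpl; auto using shift_arc, unshift_arc.
Qed.

Lemma shiftZ_of_nat k F : shiftZ M (Z.of_nat k) F = Nat.iter k (shift M) F.
Proof. destruct k; simpl; [reflexivity|]; rewrite SuccNat2Pos.id_succ; reflexivity. Qed.

Lemma shiftZ_opp_of_nat k F : shiftZ M (- Z.of_nat k) F = Nat.iter k (unshift M) F.
Proof. destruct k; simpl; [reflexivity|]; rewrite SuccNat2Pos.id_succ; reflexivity. Qed.

Lemma indec_in_single X F : indec_in M (X :: nil) F -> exists i, F = shiftZ M i X.
Proof.
  intros [_ [is Hin]]; induction is as [|i is IH]; simpl in Hin; [contradiction|].
  destruct Hin as [<-|Hin]; [exists i; reflexivity|exact (IH Hin)].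
Qed.

Lemma indec_in_shiftZ X i : is_arc M X -> indec_in M (X :: nil) (shiftZ M i X).
Proof. intros HX; split; [apply shiftZ_arc; exact HX|exists (i :: nil); left; reflexivity]. Qed.

Lemma indec_in_iter_shift X k : is_arc M X -> indec_in M (X :: nil) (Nat.iter k (shift M) X).
Proof. rewrite <- shiftZ_of_nat; apply indec_in_shiftZ. Qed.

Lemma indec_in_iter_unshift X k : is_arc M X ->
  indec_in M (X :: nil) (Nat.iter k (unshift M) X).
Proof. rewrite <- shiftZ_opp_of_nat; apply indec_in_shiftZ. Qed.

Lemma ext_step_sym G F F' : ext_step M G F F' -> ext_step M G F' F.
Proof. unfold ext_step; tauto. Qed.

Lemma clos_rt_sym_of_sym {A} (r : relation A) : (forall x y, r x y -> r y x) ->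
  forall x y, clos_refl_trans A r x y -> clos_refl_trans A r y x.
Proof.
  intros Hsym x y Hxy; induction Hxy; [apply rt_step; auto|apply rt_refl|eapply rt_trans; eauto].
Qed.

Lemma conn_shift G F : indec_in M G F -> indec_in M G (shift M F) ->
  clos_refl_trans arc (ext_step M G) F (shift M F).
Proof.
  intros HF HsF; destruct (shift_fixed_or_ext1 F (proj1 HF)) as [Heq|Hext].
  - rewrite Heq; apply rt_refl.
  - apply rt_step; split; [exact HF|split; [exact HsF|right; exact Hext]].
Qed.

Lemma conn_unshift G F : indec_in M G F -> indec_in M G (unshift M F) ->
  clos_refl_trans arc (ext_step M G) F (unshift M F).
Proof.
  intros HF HuF; apply clos_rt_sym_of_sym; [apply ext_step_sym|].
  rewrite <- (shift_unshift F (proj1 HF)) at 2.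
  apply conn_shift; [exact HuF|rewrite shift_unshift; [exact HF|exact (proj1 HF)]].
Qed.

Lemma conn_iter_shift X k : is_arc M X ->
  clos_refl_trans arc (ext_step M (X :: nil)) X (Nat.iter k (shift M) X).
Proof.
  intros HX; induction k as [|k IH]; [apply rt_refl|].
  apply (rt_trans _ _ _ _ _ IH), conn_shift;
    [apply indec_in_iter_shift | apply (indec_in_iter_shift X (S k))]; exact HX.
Qed.

Lemma conn_iter_unshift X k : is_arc M X ->
  clos_refl_trans arc (ext_step M (X :: nil)) X (Nat.iter k (unshift M) X).
Proof.
  intros HX; induction k as [|k IH]; [apply rt_refl|].
  apply (rt_trans _ _ _ _ _ IH), conn_unshift;
    [apply indec_in_iter_unshift | apply (indec_in_iter_unshift X (S k))]; exact HX.
Qed.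

Lemma conn_shiftZ X i : is_arc M X ->
  clos_refl_trans arc (ext_step M (X :: nil)) X (shiftZ M i X).
Proof.
  destruct i as [|p|p]; simpl;
    [intros; apply rt_refl|apply conn_iter_shift|apply conn_iter_unshift].
Qed.

Lemma hom_connected_single X : is_arc M X -> hom_connected M (X :: nil).
Proof.
  intros HX F F' HF HF'.
  destruct (indec_in_single X F HF) as [i ->], (indec_in_single X F' HF') as [j ->].
  apply clos_rt_rt1n, (rt_trans _ _ _ X).
  - apply clos_rt_sym_of_sym; [apply ext_step_sym|apply conn_shiftZ; exact HX].
  - apply conn_shiftZ; exact HX.
Qed.

End MarkedCircle.

Theorem proposition3p6 (n : nat) (M : R -> Prop) :
  (1 <= n)%nat -> admissible M n ->
  forall X : arc, is_arc M X -> hom_connected M (X :: nil).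
Proof.
  (* Neither the number of accumulation points nor [1 <= n] plays a role. *)
  intros _ (HS & Hdisc & Hinf & Htwo & _).
  apply hom_connected_single; assumption.
Qed.
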